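(* A homeomorphism $f$ of a compact metric space $(X,d)$ has the L-shadowing property if and only if $f$ has the shadowing property and for every $\epsilon>0$ there is $\delta>0$ such that $d(x,y)<\delta$ implies $V^s_\epsilon(x)\cap V^u_\epsilon(y)\neq\emptyset$.
   Context: L-shadowing: for every $\varepsilon>0$ there is $\delta>0$ such that every sequence $(x_k)_{k\in\mathbb{Z}}$ with $d(f(x_k),x_{k+1})\le\delta$ for all $k$ and $d(f(x_k),x_{k+1})\to0$ as $|k|\to\infty$ admits $z$ with $d(f^k(z),x_k)\le\varepsilon$ for all $k$ and $d(f^k(z),x_k)\to0$ as $|k|\to\infty$. Shadowing: for every $\varepsilon>0$ there is $\delta>0$ such that for every sequence $(x_k)_{k\in\mathbb{Z}}$ with $d(f(x_k),x_{k+1})<\delta$ for all $k$ there is $y$ with $d(f^k(y),x_k)<\varepsilon$ for all $k\in\mathbb{Z}$. For $x\in X$, $\epsilon>0$: $W^s_\epsilon(x)=\{y: d(f^n(x),f^n(y))\le\epsilon\ \forall n\ge0\}$, $W^u_\epsilon(x)=\{y: d(f^{-n}(x),f^{-n}(y))\le\epsilon\ \forall n\ge0\}$, $W^s(x)=\{y: d(f^n(x),f^n(y))\to0 \text{ as } n\to+\infty\}$, $W^u(x)=\{y: d(f^{-n}(x),f^{-n}(y))\to0 \text{ as } n\to+\infty\}$, $V^s_\epsilon(x)=W^s(x)\cap W^s_\epsilon(x)$, $V^u_\epsilon(x)=W^u(x)\cap W^u_\epsilon(x)$. *)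

From Stdlib Require Import Reals ZArith List.
Open Scope R_scope.

Section Defs.
Context {X : Type} (d : X -> X -> R).

Definition is_metric : Prop :=
  (forall x y, 0 <= d x y) /\
  (forall x y, d x y = 0 <-> x = y) /\
  (forall x y, d x y = d y x) /\
  (forall x y z, d x z <= d x y + d y z).

Definition open_set (U : X -> Prop) : Prop :=
  forall x, U x -> exists r, r > 0 /\ forall y, d x y < r -> U y.

Definition compact_space : Prop :=
  forall (I : Type) (U : I -> X -> Prop),
    (forall i, open_set (U i)) ->
    (forall x, exists i, U i x) ->
    exists l : list I, forall x, exists i, In i l /\ U i x.

Definition continuous_map (h : X -> X) : Prop :=
  forall x eps, eps > 0 -> exists delta, delta > 0 /\
    forall y, d x y < delta -> d (h x) (h y) < eps.

Definition homeo_with_inverse (f g : X -> X) : Prop :=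
  (forall x, g (f x) = x) /\ (forall x, f (g x) = x) /\
  continuous_map f /\ continuous_map g.

Definition fpow (f g : X -> X) (k : Z) (x : X) : X :=
  match k with
  | Z0 => x
  | Zpos p => Nat.iter (Pos.to_nat p) f x
  | Zneg p => Nat.iter (Pos.to_nat p) g x
  end.

Definition tends_to_0_Z (a : Z -> R) : Prop :=
  forall eps, eps > 0 -> exists N : nat,
    forall k : Z, (Z.of_nat N <= Z.abs k)%Z -> Rabs (a k) < eps.

Definition shadowing (f g : X -> X) : Prop :=
  forall eps, eps > 0 -> exists delta, delta > 0 /\
    forall xs : Z -> X,
      (forall k, d (f (xs k)) (xs (k + 1)%Z) < delta) ->
      exists y, forall k, d (fpow f g k y) (xs k) < eps.

Definition L_shadowing (f g : X -> X) : Prop :=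
  forall eps, eps > 0 -> exists delta, delta > 0 /\
    forall xs : Z -> X,
      (forall k, d (f (xs k)) (xs (k + 1)%Z) <= delta) ->
      tends_to_0_Z (fun k => d (f (xs k)) (xs (k + 1)%Z)) ->
      exists z, (forall k, d (fpow f g k z) (xs k) <= eps) /\
                tends_to_0_Z (fun k => d (fpow f g k z) (xs k)).

(* local / global stable and unstable sets; y is a member of the set of x *)
Definition Ws_eps (f : X -> X) (eps : R) (x y : X) : Prop :=
  forall n : nat, d (Nat.iter n f x) (Nat.iter n f y) <= eps.
Definition Wu_eps (g : X -> X) (eps : R) (x y : X) : Prop :=
  forall n : nat, d (Nat.iter n g x) (Nat.iter n g y) <= eps.
Definition Ws (f : X -> X) (x y : X) : Prop :=
  forall e, e > 0 -> exists N : nat, forall n, (N <= n)%nat ->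
    d (Nat.iter n f x) (Nat.iter n f y) < e.
Definition Wu (g : X -> X) (x y : X) : Prop :=
  forall e, e > 0 -> exists N : nat, forall n, (N <= n)%nat ->
    d (Nat.iter n g x) (Nat.iter n g y) < e.
Definition Vs_eps (f : X -> X) (eps : R) (x y : X) : Prop :=
  Ws f x y /\ Ws_eps f eps x y.
Definition Vu_eps (g : X -> X) (eps : R) (x y : X) : Prop :=
  Wu g x y /\ Wu_eps g eps x y.

End Defs.

(* (=>) Shadowing: a delta-pseudo-orbit frozen into true orbits outside
   [-n, n] has vanishing jumps, so it is L-shadowed by some z_n; a cluster
   point of (z_n) shadows the whole pseudo-orbit, by compactness and
   continuity of the iterates.  Intersection: the orbit of x in nonnegative
   times glued to that of y in negative times has a single jump d(y, x); any
   point L-shadowing it lies in V^s_eps(x) /\ V^u_eps(y).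

   (<=) The intersection condition is a local product structure along the
   family of iterates f^k, in both time directions.  Given a pseudo-orbit
   with vanishing jumps, shadowing yields a point p0 following it and, for
   each precision, points shadowing its tails.  Refining p0 infinitely often
   with the product structure at summable radii (section ForwardShadowing)
   yields p forward asymptotic to the pseudo-orbit; symmetrically q backward
   asymptotic; joining p and q at time 0 gives the L-shadowing point. *)
From Stdlib Require Import Reals ZArith List Lra Lia Classical IndefiniteDescription.
Open Scope R_scope.

Section Metric.
Context {X : Type} (d : X -> X -> R) (Hm : is_metric d).

Lemma dist_refl x : d x x = 0.
Proof. destruct Hm as (_ & Hsep & _). apply Hsep; reflexivity. Qed.

Lemma dist_sym x y : d x y = d y x.
Proof. destruct Hm as (_ & _ & Hsym & _). apply Hsym. Qed.

Lemma dist_nonneg x y : 0 <= d x y.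
Proof. destruct Hm as (Hpos & _). apply Hpos. Qed.

Lemma dist_tri x y z : d x z <= d x y + d y z.
Proof. destruct Hm as (_ & _ & _ & Htri). apply Htri. Qed.

Lemma dist_tri_l x y z : d x z <= d y x + d y z.
Proof. rewrite (dist_sym y x). apply dist_tri. Qed.

Lemma dist_tri_r x y z : d x z <= d x y + d z y.
Proof. rewrite (dist_sym z y). apply dist_tri. Qed.

End Metric.

Section Iterates.
Context {X : Type} (f g : X -> X).
Hypotheses (gf : forall x, g (f x) = x) (fg : forall x, f (g x) = x).

Lemma fpow_nat n x : fpow f g (Z.of_nat n) x = Nat.iter n f x.
Proof. destruct n; simpl; auto. rewrite SuccNat2Pos.id_succ. reflexivity. Qed.

Lemma fpow_negnat n x : fpow f g (- Z.of_nat n) x = Nat.iter n g x.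
Proof. destruct n; simpl; auto. rewrite SuccNat2Pos.id_succ. reflexivity. Qed.

Lemma fpow_nonneg k x : (0 <= k)%Z -> fpow f g k x = Nat.iter (Z.to_nat k) f x.
Proof. intros Hk. rewrite <- fpow_nat, Z2Nat.id; auto. Qed.

Lemma fpow_nonpos k x : (k <= 0)%Z -> fpow f g k x = Nat.iter (Z.to_nat (- k)) g x.
Proof. intros Hk. rewrite <- fpow_negnat, Z2Nat.id, Z.opp_involutive by lia. reflexivity. Qed.

Lemma fpow_succ k x : fpow f g (Z.succ k) x = f (fpow f g k x).
Proof.
  destruct (Z_le_gt_dec 0 k) as [Hk | Hk].
  - rewrite !fpow_nonneg, Z2Nat.inj_succ by lia. reflexivity.
  - rewrite !fpow_nonpos by lia.
    replace (Z.to_nat (- k)) with (S (Z.to_nat (- Z.succ k))) by lia.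
    simpl. rewrite fg. reflexivity.
Qed.

Lemma fpow_pred k x : fpow f g (Z.pred k) x = g (fpow f g k x).
Proof. rewrite <- (Z.succ_pred k) at 2. rewrite fpow_succ, gf. reflexivity. Qed.

Lemma fpow_add a b x : fpow f g (a + b) x = fpow f g a (fpow f g b x).
Proof.
  revert x. induction a using Z.peano_ind; intros x.
  - reflexivity.
  - rewrite Z.add_succ_l, !fpow_succ, IHa. reflexivity.
  - rewrite Z.add_pred_l, !fpow_pred, IHa. reflexivity.
Qed.

End Iterates.

Lemma continuous_comp {X} (d : X -> X -> R) (h1 h2 : X -> X) :
  continuous_map d h1 -> continuous_map d h2 -> continuous_map d (fun x => h1 (h2 x)).
Proof.
  intros C1 C2 x eps Heps.
  destruct (C1 (h2 x) eps Heps) as (r1 & Hr1 & H1).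
  destruct (C2 x r1 Hr1) as (r2 & Hr2 & H2).
  exists r2. split; auto.
Qed.

Lemma continuous_ext {X} (d : X -> X -> R) (h1 h2 : X -> X) :
  (forall x, h1 x = h2 x) -> continuous_map d h1 -> continuous_map d h2.
Proof.
  intros E C x eps Heps. destruct (C x eps Heps) as (r & Hr & H).
  exists r. split; auto. intros y Hy. rewrite <- !E. auto.
Qed.

Lemma fpow_continuous {X} (d : X -> X -> R) f g :
  homeo_with_inverse d f g -> forall k, continuous_map d (fpow f g k).
Proof.
  intros (gf & fg & Cf & Cg) k. induction k using Z.peano_ind.
  - intros x eps Heps. exists eps. split; auto.
  - apply (continuous_ext d (fun x => f (fpow f g k x))).
    + intros x. rewrite fpow_succ; auto.
    + apply continuous_comp; auto.
  - apply (continuous_ext d (fun x => g (fpow f g k x))).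
    + intros x. rewrite fpow_pred; auto.
    + apply continuous_comp; auto.
Qed.

Definition cluster {X} (d : X -> X -> R) (s : nat -> X) (p : X) : Prop :=
  forall r, r > 0 -> forall M, exists m, (M <= m)%nat /\ d p (s m) < r.

Lemma fold_max_ge {A} (h : A -> nat) (l : list A) i :
  In i l -> (h i <= fold_right (fun j acc => Nat.max (h j) acc) 0%nat l)%nat.
Proof.
  induction l as [|a l IH]; simpl; [tauto|].
  intros [-> | Hi]; [lia|]. specialize (IH Hi). lia.
Qed.

(* Otherwise the balls avoiding a tail of the sequence would
   cover X, and a finite subcover would miss a late enough term. *)
Lemma compact_cluster {X} (d : X -> X -> R) :
  is_metric d -> compact_space d -> forall s : nat -> X, exists p, cluster d s p.
Proof.
  intros Hm Hc s. apply NNPP. intros Hnone.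
  set (I := {t : X * R * nat | snd (fst t) > 0 /\
              forall m, (snd t <= m)%nat -> d (fst (fst t)) (s m) >= snd (fst t)}).
  set (ball := fun (i : I) y => d (fst (fst (proj1_sig i))) y < snd (fst (proj1_sig i))).
  destruct (Hc I ball) as [l Hl].
  - intros i y Hy. unfold ball in *.
    exists (snd (fst (proj1_sig i)) - d (fst (fst (proj1_sig i))) y).
    split; [lra|]. intros z Hz. pose proof (dist_tri d Hm (fst (fst (proj1_sig i))) y z). lra.
  - intros x. apply NNPP. intros Hx. apply Hnone. exists x. intros r Hr M.
    apply NNPP. intros Hfar. apply Hx.
    assert (P : snd (fst (x, r, M)) > 0 /\ forall m, (snd (x, r, M) <= m)%nat ->
                 d (fst (fst (x, r, M))) (s m) >= snd (fst (x, r, M))).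
    { simpl. split; auto. intros m Hmm. apply Rnot_lt_ge. intros Hlt. apply Hfar. eauto. }
    exists (exist _ (x, r, M) P). unfold ball. simpl. rewrite dist_refl; auto.
  - set (M := fold_right (fun (j : I) acc => Nat.max (snd (proj1_sig j)) acc) 0%nat l).
    destruct (Hl (s M)) as (i & Hi & Hball).
    pose proof (fold_max_ge (fun j : I => snd (proj1_sig j)) l i Hi) as Hle.
    unfold ball in Hball. destruct (proj2_sig i) as [_ Hfar].
    specialize (Hfar M Hle). simpl in *. lra.
Qed.

Lemma cluster_dist_le {X} (d : X -> X -> R) (s : nat -> X) p y B (G : X -> X) :
  is_metric d -> continuous_map d G -> cluster d s p ->
  (exists J, forall j, (J <= j)%nat -> d (G (s j)) y <= B) -> d (G p) y <= B.
Proof.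
  intros Hm CG Hcl [J HJ].
  destruct (Rle_or_lt (d (G p) y) B) as [|Hlt]; auto. exfalso.
  destruct (CG p (d (G p) y - B)) as (r & Hr & Hc); [lra|].
  destruct (Hcl r Hr J) as (m & HmJ & Hdm).
  specialize (Hc _ Hdm). specialize (HJ m HmJ).
  pose proof (dist_tri d Hm (G p) (G (s m)) y). lra.
Qed.

Definition vanishes_fwd (u : Z -> R) : Prop :=
  forall e, e > 0 -> exists K, forall k, (K <= k)%Z -> u k < e.
Definition vanishes_bwd (u : Z -> R) : Prop :=
  forall e, e > 0 -> exists K, forall k, (k <= K)%Z -> u k < e.

Lemma vanishes_bwd_of_reverse (u : Z -> R) :
  vanishes_fwd (fun k => u (- k)%Z) -> vanishes_bwd u.
Proof.
  intros Hu e He. destruct (Hu e He) as [K HK]. exists (- K)%Z.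
  intros k Hk. rewrite <- (Z.opp_involutive k). apply HK. lia.
Qed.

Lemma vanishes_fwd_tri {X} (d : X -> X -> R) (a b c : Z -> X) : is_metric d ->
  vanishes_fwd (fun k => d (a k) (b k)) -> vanishes_fwd (fun k => d (a k) (c k)) ->
  vanishes_fwd (fun k => d (b k) (c k)).
Proof.
  intros Hm Hab Hac e He.
  destruct (Hab (e / 2)) as [K1 H1]; [lra|]. destruct (Hac (e / 2)) as [K2 H2]; [lra|].
  exists (Z.max K1 K2). intros k Hk.
  pose proof (H1 k ltac:(lia)). pose proof (H2 k ltac:(lia)).
  pose proof (dist_tri_l d Hm (b k) (a k) (c k)). lra.
Qed.

Lemma vanishes_bwd_tri {X} (d : X -> X -> R) (a b c : Z -> X) : is_metric d ->
  vanishes_bwd (fun k => d (a k) (b k)) -> vanishes_bwd (fun k => d (a k) (c k)) ->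
  vanishes_bwd (fun k => d (b k) (c k)).
Proof.
  intros Hm Hab Hac e He.
  destruct (Hab (e / 2)) as [K1 H1]; [lra|]. destruct (Hac (e / 2)) as [K2 H2]; [lra|].
  exists (Z.min K1 K2). intros k Hk.
  pose proof (H1 k ltac:(lia)). pose proof (H2 k ltac:(lia)).
  pose proof (dist_tri_l d Hm (b k) (a k) (c k)). lra.
Qed.

Lemma tends_to_0_Z_of_vanishes (u : Z -> R) :
  (forall k, 0 <= u k) -> vanishes_fwd u -> vanishes_bwd u -> tends_to_0_Z u.
Proof.
  intros Hpos Hf Hb e He.
  destruct (Hf e He) as [K1 H1]. destruct (Hb e He) as [K2 H2].
  exists (Z.to_nat (Z.max K1 (- K2))). intros k Hk.
  rewrite Rabs_pos_eq by apply Hpos.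
  destruct (Z_le_gt_dec 0 k); [apply H1 | apply H2]; lia.
Qed.

(* For F = fpow f g this is the
   condition V^s_eta(x) /\ V^u_eta(y) <> empty, transported to time m. *)
Definition product_at {X} (d : X -> X -> R) (F : Z -> X -> X) (eta delta : R) : Prop :=
  forall m a b, d (F m a) (F m b) < delta -> exists w,
    (forall k, (m <= k)%Z -> d (F k a) (F k w) <= eta) /\
    vanishes_fwd (fun k => d (F k a) (F k w)) /\
    (forall k, (k <= m)%Z -> d (F k b) (F k w) <= eta) /\
    vanishes_bwd (fun k => d (F k b) (F k w)).

Definition local_product {X} (d : X -> X -> R) (F : Z -> X -> X) : Prop :=
  forall eta, eta > 0 -> exists delta, delta > 0 /\ product_at d F eta delta.

(* Reversing time exchanges the roles of the two points. *)
Lemma local_product_reverse {X} (d : X -> X -> R) (F : Z -> X -> X) :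
  is_metric d -> local_product d F -> local_product d (fun k => F (- k)%Z).
Proof.
  intros Hm HP eta Heta. destruct (HP eta Heta) as (delta & Hdelta & Hprod).
  exists delta. split; auto. intros m a b Hab.
  destruct (Hprod (- m)%Z b a) as (w & Hb & Hbv & Ha & Hav).
  { rewrite dist_sym; auto. }
  exists w. split; [|split; [|split]].
  - intros k Hk. apply Ha. lia.
  - intros e He. destruct (Hav e He) as [K HK]. exists (- K)%Z. intros k Hk. apply HK. lia.
  - intros k Hk. apply Hb. lia.
  - intros e He. destruct (Hbv e He) as [K HK]. exists (- K)%Z. intros k Hk. apply HK. lia.
Qed.

(* The intersection condition of the theorem is local product structure of
   the orbit family fpow f g: apply it at time m to f^m a and f^m b. *)
Lemma local_product_fpow {X} (d : X -> X -> R) (f g : X -> X) :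
  (forall x, g (f x) = x) -> (forall x, f (g x) = x) ->
  (forall eps, eps > 0 -> exists delta, delta > 0 /\
     forall x y, d x y < delta -> exists z, Vs_eps d f eps x z /\ Vu_eps d g eps y z) ->
  local_product d (fpow f g).
Proof.
  intros gf fg HPC eta Heta. destruct (HPC eta Heta) as (delta & Hdelta & Hint).
  exists delta. split; auto. intros m a b Hab.
  destruct (Hint _ _ Hab) as (z & [Hs Hse] & [Hu Hue]).
  exists (fpow f g (- m) z).
  assert (Shift : forall k c, fpow f g k c = fpow f g (k - m) (fpow f g m c)).
  { intros k c. rewrite <- fpow_add by auto. f_equal. lia. }
  assert (Back : forall k, fpow f g k (fpow f g (- m) z) = fpow f g (k - m) z).
  { intros k. rewrite <- fpow_add by auto. reflexivity. }
  split; [|split; [|split]].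
  - intros k Hk. rewrite Shift, Back, !(fpow_nonneg _ _ (k - m)) by lia. apply Hse.
  - intros e He. destruct (Hs e He) as [N HN]. exists (m + Z.of_nat N)%Z.
    intros k Hk. rewrite Shift, Back, !(fpow_nonneg _ _ (k - m)) by lia. apply HN. lia.
  - intros k Hk. rewrite (Shift k b), Back, !(fpow_nonpos _ _ (k - m)) by lia. apply Hue.
  - intros e He. destruct (Hu e He) as [N HN]. exists (m - Z.of_nat N)%Z.
    intros k Hk. rewrite (Shift k b), Back, !(fpow_nonpos _ _ (k - m)) by lia. apply HN. lia.
Qed.

Section Freezing.
Context {X : Type} (d : X -> X -> R) (f g : X -> X).
Hypotheses (Hm : is_metric d) (fg : forall x, f (g x) = x).

(* When c is a clamp onto an interval of
   times, the result follows xs on the interval and true orbits outside. *)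
Definition freeze (xs : Z -> X) (c : Z -> Z) (k : Z) : X :=
  fpow f g (k - c k) (xs (c k)).

Definition clamp_like (c : Z -> Z) : Prop :=
  forall k, c (k + 1)%Z = c k \/ (c k = k /\ c (k + 1)%Z = (k + 1)%Z).

Lemma freeze_fixed xs c k : c k = k -> freeze xs c k = xs k.
Proof. intros E. unfold freeze. rewrite E, Z.sub_diag. reflexivity. Qed.

Lemma freeze_jump xs c : clamp_like c -> forall k,
  d (f (freeze xs c k)) (freeze xs c (k + 1)) = 0 \/
  (c k = k /\ c (k + 1)%Z = (k + 1)%Z /\
   d (f (freeze xs c k)) (freeze xs c (k + 1)) = d (f (xs k)) (xs (k + 1)%Z)).
Proof.
  intros Hc k. destruct (Hc k) as [E | [E1 E2]].
  - left. unfold freeze. rewrite E. replace (k + 1 - c k)%Z with (Z.succ (k - c k)) by lia.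
    rewrite fpow_succ by auto. apply dist_refl; auto.
  - right. rewrite !freeze_fixed; auto.
Qed.

Lemma shadow_frozen xs c eps delta :
  (forall y : Z -> X, (forall k, d (f (y k)) (y (k + 1)%Z) < delta) ->
     exists q, forall k, d (fpow f g k q) (y k) < eps) ->
  clamp_like c -> delta > 0 ->
  (forall k, c k = k -> c (k + 1)%Z = (k + 1)%Z -> d (f (xs k)) (xs (k + 1)%Z) < delta) ->
  exists q, forall k, c k = k -> d (fpow f g k q) (xs k) < eps.
Proof.
  intros Hsh Hc Hdelta Hjump.
  destruct (Hsh (freeze xs c)) as [q Hq].
  - intros k. destruct (freeze_jump xs c Hc k) as [E | (E1 & E2 & E)]; rewrite E; auto.
  - exists q. intros k Hk. rewrite <- (freeze_fixed xs c k Hk). apply Hq.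
Qed.

Lemma jump_small_eventually xs eps :
  tends_to_0_Z (fun k => d (f (xs k)) (xs (k + 1)%Z)) -> eps > 0 ->
  exists N : nat, forall k, (Z.of_nat N <= Z.abs k)%Z -> d (f (xs k)) (xs (k + 1)%Z) < eps.
Proof.
  intros Ht Heps. destruct (Ht eps Heps) as [N HN]. exists N. intros k Hk.
  pose proof (HN k Hk). pose proof (Rle_abs (d (f (xs k)) (xs (k + 1)%Z))). lra.
Qed.

(* Under shadowing this holds for pseudo-orbits with vanishing jumps: clamp
   onto [N, +oo), resp. (-oo, -N], where the jumps are small. *)
Definition tail_shadowable (F : Z -> X -> X) (x : Z -> X) : Prop :=
  forall al, al > 0 -> exists N q, forall k, (N <= k)%Z -> d (F k q) (x k) < al.

Lemma tail_shadowable_fwd xs :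
  shadowing d f g -> tends_to_0_Z (fun k => d (f (xs k)) (xs (k + 1)%Z)) ->
  tail_shadowable (fpow f g) xs.
Proof.
  intros Hsh Ht al Hal.
  destruct (Hsh al Hal) as (delta & Hdelta & Hs).
  destruct (jump_small_eventually xs delta Ht Hdelta) as [N HN].
  set (c := fun k => Z.max (Z.of_nat N) k).
  destruct (shadow_frozen xs c al delta Hs) as [q Hq]; auto.
  - intros k. unfold c. lia.
  - intros k Hk _. apply HN. unfold c in Hk. lia.
  - exists (Z.of_nat N), q. intros k Hk. apply Hq. unfold c. lia.
Qed.

Lemma tail_shadowable_bwd xs :
  shadowing d f g -> tends_to_0_Z (fun k => d (f (xs k)) (xs (k + 1)%Z)) ->
  tail_shadowable (fun k => fpow f g (- k)) (fun k => xs (- k)%Z).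
Proof.
  intros Hsh Ht al Hal.
  destruct (Hsh al Hal) as (delta & Hdelta & Hs).
  destruct (jump_small_eventually xs delta Ht Hdelta) as [N HN].
  set (c := fun k => Z.min (- Z.of_nat N) k).
  destruct (shadow_frozen xs c al delta Hs) as [q Hq]; auto.
  - intros k. unfold c. lia.
  - intros k _ Hk. apply HN. unfold c in Hk. lia.
  - exists (Z.of_nat N), q. intros k Hk. apply Hq. unfold c. lia.
Qed.

(* L-shadowing implies shadowing: freeze a delta-pseudo-orbit outside
   [-n, n], L-shadow the result by z_n, and pass to a cluster point of the
   z_n, which shadows the whole pseudo-orbit by continuity of the f^k. *)
Lemma shadowing_of_L_shadowing :
  compact_space d -> homeo_with_inverse d f g -> L_shadowing d f g -> shadowing d f g.
Proof.
  intros Hc Hh HL eps Heps.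
  destruct (HL (eps / 2)) as (delta & Hdelta & HL'); [lra|].
  exists delta. split; auto. intros xs Hjump.
  set (c := fun (n : nat) k => Z.max (- Z.of_nat n) (Z.min (Z.of_nat n) k)).
  assert (Hz : forall n, exists z, forall k, d (fpow f g k z) (freeze xs (c n) k) <= eps / 2).
  { intros n.
    assert (Hcl : clamp_like (c n)) by (intros k; unfold c; lia).
    destruct (HL' (freeze xs (c n))) as (z & Hz & _).
    - intros k. destruct (freeze_jump xs (c n) Hcl k) as [E | (_ & _ & E)]; rewrite E.
      + lra.
      + left. apply Hjump.
    - intros e He. exists (S n). intros k Hk.
      destruct (freeze_jump xs (c n) Hcl k) as [E | (E1 & _)].
      + rewrite E, Rabs_R0. auto.
      + exfalso. unfold c in E1. lia.
    - exists z. exact Hz. }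
  apply functional_choice in Hz. destruct Hz as [zs Hzs].
  destruct (compact_cluster d Hm Hc zs) as [p Hp].
  exists p. intros k.
  assert (d (fpow f g k p) (xs k) <= eps / 2); [|lra].
  apply (cluster_dist_le d zs p (xs k) _ (fpow f g k) Hm (fpow_continuous d f g Hh k) Hp).
  exists (Z.abs_nat k). intros n Hn. specialize (Hzs n k).
  rewrite freeze_fixed in Hzs; auto. unfold c. lia.
Qed.

Definition glued_orbit (x y : X) (k : Z) : X :=
  if (0 <=? k)%Z then fpow f g k x else fpow f g k y.

Lemma glued_orbit_nat x y n : glued_orbit x y (Z.of_nat n) = Nat.iter n f x.
Proof.
  unfold glued_orbit. replace (0 <=? Z.of_nat n)%Z with true by (symmetry; apply Z.leb_le; lia).
  apply fpow_nat.
Qed.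

Lemma glued_orbit_neg x y n : glued_orbit x y (- Z.of_nat (S n)) = Nat.iter (S n) g y.
Proof.
  unfold glued_orbit. replace (0 <=? - Z.of_nat (S n))%Z with false by (symmetry; apply Z.leb_gt; lia).
  apply fpow_negnat.
Qed.

Lemma glued_orbit_jump x y k :
  d (f (glued_orbit x y k)) (glued_orbit x y (k + 1)) = if Z.eq_dec k (-1) then d y x else 0.
Proof.
  destruct (Z.eq_dec k (-1)) as [-> | Hk].
  - unfold glued_orbit. simpl. rewrite fg. reflexivity.
  - unfold glued_orbit.
    destruct (Z.leb_spec 0 k); destruct (Z.leb_spec 0 (k + 1)); try lia;
      rewrite Z.add_1_r, fpow_succ by auto; apply dist_refl; auto.
Qed.

(* L-shadowing implies the intersection condition: L-shadow the glued orbit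
   of x and y; the shadowing point lies in V^s_eps(x) and V^u_eps(y). *)
Lemma intersection_of_L_shadowing :
  L_shadowing d f g -> forall eps, eps > 0 -> exists delta, delta > 0 /\
    forall x y, d x y < delta -> exists z, Vs_eps d f eps x z /\ Vu_eps d g eps y z.
Proof.
  intros HL eps Heps.
  destruct (HL (eps / 2)) as (delta & Hdelta & HL'); [lra|].
  exists (Rmin delta (eps / 2)). split; [apply Rmin_glb_lt; lra|].
  intros x y Hxy. pose proof (Rmin_l delta (eps / 2)). pose proof (Rmin_r delta (eps / 2)).
  destruct (HL' (glued_orbit x y)) as (z & Hz & Hzv).
  - intros k. rewrite glued_orbit_jump.
    destruct (Z.eq_dec k (-1)); [rewrite dist_sym by auto|]; lra.
  - intros e He. exists 2%nat. intros k Hk. rewrite glued_orbit_jump.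
    destruct (Z.eq_dec k (-1)); [lia|]. rewrite Rabs_R0. auto.
  - assert (Hnat : forall n, d (Nat.iter n f x) (Nat.iter n f z) = d (fpow f g (Z.of_nat n) z) (glued_orbit x y (Z.of_nat n))).
    { intros n. rewrite glued_orbit_nat, fpow_nat, dist_sym by auto. reflexivity. }
    assert (Hneg : forall n, d (Nat.iter (S n) g y) (Nat.iter (S n) g z) = d (fpow f g (- Z.of_nat (S n)) z) (glued_orbit x y (- Z.of_nat (S n)))).
    { intros n. rewrite glued_orbit_neg, fpow_negnat, dist_sym by auto. reflexivity. }
    exists z. split; split.
    + intros e He. destruct (Hzv e He) as [N HN]. exists N. intros n Hn.
      rewrite Hnat. specialize (HN (Z.of_nat n) ltac:(lia)).
      rewrite Rabs_pos_eq in HN by apply dist_nonneg, Hm. exact HN.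
    + intros n. rewrite Hnat. pose proof (Hz (Z.of_nat n)). lra.
    + intros e He. destruct (Hzv e He) as [N HN]. exists (S N). intros [|n] Hn; [lia|].
      rewrite Hneg. specialize (HN (- Z.of_nat (S n))%Z ltac:(lia)).
      rewrite Rabs_pos_eq in HN by apply dist_nonneg, Hm. exact HN.
    + intros [|n].
      * pose proof (Hnat 0%nat) as Hx0. pose proof (Hz (Z.of_nat 0)).
        simpl Nat.iter in *. pose proof (dist_tri_l d Hm y x z). lra.
      * rewrite Hneg. pose proof (Hz (- Z.of_nat (S n))%Z). lra.
Qed.

End Freezing.

Lemma pow2_ge n : 1 + INR n <= 2 ^ n.
Proof.
  induction n as [|n IH]; [simpl; lra|]. rewrite S_INR. simpl. pose proof (pos_INR n). lra.
Qed.

(* Along a family F with local product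
   structure, let x be a sequence whose tails are shadowed with arbitrary
   precision, and p0 a point shadowing all of x closely.  We correct p0 in
   infinitely many steps: at step j the current point is forward asymptotic
   to a guide point shadowing a tail of x with tolerance tol j; the next,
   finer guide is joined to the current point by the product structure at
   radius c1 / 2^(j+1).  Corrections are summable, and a cluster point of the
   current points shadows x and is forward asymptotic to it. *)
Section ForwardShadowing.
Context {X : Type} (d : X -> X -> R) (F : Z -> X -> X).
Hypothesis Hm : is_metric d.
Variable D : R -> R.
Hypothesis HD : forall eta, eta > 0 -> D eta > 0 /\ product_at d F eta (D eta).
Variable c1 : R.
Hypothesis Hc1 : c1 > 0.

(* radius j: the closeness granted by the j-th correction; gap j: the
   product-structure scale at which it is available. *)
Definition radius (j : nat) : R := c1 / 2 ^ S j.
Definition gap (j : nat) : R := D (radius j).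

Lemma radius_pos j : radius j > 0.
Proof. unfold radius. apply Rdiv_lt_0_compat; auto. apply pow_lt; lra. Qed.

Lemma radius_S j : radius (S j) = radius j / 2.
Proof. unfold radius. pose proof (pow_lt 2 j). simpl. field. lra. Qed.

Lemma radius_0 : radius 0 = c1 / 2.
Proof. unfold radius. simpl. field. Qed.

Lemma radius_antitone i j : (i <= j)%nat -> radius j <= radius i.
Proof.
  induction 1 as [|j _ IH]; [lra|]. rewrite radius_S. pose proof (radius_pos j). lra.
Qed.

Lemma radius_small e : e > 0 -> exists i, 5 * radius i < e.
Proof.
  intros He. destruct (INR_archimed e (5 * c1)) as [n Hn]; auto.
  exists n. unfold radius. pose proof (pow2_ge (S n)) as P. rewrite S_INR in P.
  pose proof (pow_lt 2 (S n)).
  assert (5 * (c1 / 2 ^ S n) * 2 ^ S n = 5 * c1) by (field; lra).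
  assert (e * 2 ^ S n > 5 * c1) by nra.
  apply (Rmult_lt_reg_r (2 ^ S n)); lra.
Qed.

Lemma gap_pos j : gap j > 0.
Proof. apply (HD _ (radius_pos j)). Qed.

(* c0: the initial shadowing precision required of p0; tol j: the precision
   of the j-th guide. *)
Definition c0 : R := Rmin c1 (gap 0 / 4).
Definition tol (j : nat) : R :=
  match j with
  | O => c0
  | S j' => Rmin (Rmin (radius j) c0) (Rmin (gap j') (gap j) / 4)
  end.

Lemma c0_pos : c0 > 0.
Proof. unfold c0. pose proof (gap_pos 0). apply Rmin_glb_lt; lra. Qed.

Lemma c0_le_c1 : c0 <= c1.
Proof. apply Rmin_l. Qed.

Lemma tol_pos j : tol j > 0.
Proof.
  destruct j as [|j]; [apply c0_pos|].
  pose proof (gap_pos j). pose proof (gap_pos (S j)). pose proof (radius_pos (S j)). pose proof c0_pos.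
  assert (Rmin (gap j) (gap (S j)) > 0) by (apply Rmin_glb_lt; lra).
  simpl. apply Rmin_glb_lt; [apply Rmin_glb_lt|]; lra.
Qed.

Lemma tol_le_gap j : tol j <= gap j / 4.
Proof.
  destruct j as [|j]; [apply Rmin_r|]. simpl.
  pose proof (Rmin_r (Rmin (radius (S j)) c0) (Rmin (gap j) (gap (S j)) / 4)).
  pose proof (Rmin_r (gap j) (gap (S j))). lra.
Qed.

Lemma tol_S_le_gap j : tol (S j) <= gap j / 4.
Proof.
  simpl. pose proof (Rmin_r (Rmin (radius (S j)) c0) (Rmin (gap j) (gap (S j)) / 4)).
  pose proof (Rmin_l (gap j) (gap (S j))). lra.
Qed.

Lemma tol_S_le j : tol (S j) <= radius (S j) /\ tol (S j) <= c0.
Proof.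
  simpl. pose proof (Rmin_l (Rmin (radius (S j)) c0) (Rmin (gap j) (gap (S j)) / 4)).
  pose proof (Rmin_l (radius (S j)) c0). pose proof (Rmin_r (radius (S j)) c0). lra.
Qed.

Variable x : Z -> X.
Hypothesis Htail : tail_shadowable d F x.

(* A stage of the construction: the current point, its guide, and the time
   from which the guide shadows x. *)
Record stage := mkstage { current : X; guide : X; start : Z }.

Definition admissible (j : nat) (s : stage) : Prop :=
  (forall k, (start s <= k)%Z -> d (F k (guide s)) (x k) < tol j) /\
  vanishes_fwd (fun k => d (F k (guide s)) (F k (current s))).

Definition corrects (j : nat) (s s' : stage) : Prop :=
  admissible (S j) s' /\
  (forall k, (k <= start s')%Z -> d (F k (current s)) (F k (current s')) <= radius j) /\
  (forall k, (start s' <= k)%Z -> d (F k (guide s')) (F k (current s')) <= radius j).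

(* One correction step: far enough in the future the current point, its
   guide, x and a finer guide are all gap j-close, so the product structure
   joins the finer guide (forward) to the current point (backward). *)
Lemma correction_exists j s : admissible j s -> exists s', corrects j s s'.
Proof.
  intros [Hguide Hasym].
  destruct (HD (radius j) (radius_pos j)) as [_ Hprod].
  pose proof (gap_pos j). pose proof (tol_S_le_gap j). pose proof (tol_le_gap j).
  destruct (Hasym (gap j / 4)) as [K HK]; [lra|].
  destruct (Htail (tol (S j)) (tol_pos (S j))) as (N & q & Hq).
  set (m := Z.max (start s) (Z.max N K)).
  assert (Hclose : d (F m q) (F m (current s)) < gap j).
  { pose proof (Hq m ltac:(unfold m; lia)).
    pose proof (Hguide m ltac:(unfold m; lia)).
    pose proof (HK m ltac:(unfold m; lia)).
    pose proof (dist_tri_r d Hm (F m q) (x m) (F m (guide s))).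
    pose proof (dist_tri d Hm (F m q) (F m (guide s)) (F m (current s))). lra. }
  destruct (Hprod m q (current s) Hclose) as (w & Hfwd & Hfwdv & Hbwd & _).
  exists (mkstage w q m). repeat split; simpl; auto.
  intros k Hk. apply Hq. lia.
Qed.

Variable next : nat -> stage -> stage.
Hypothesis Hnext : forall j s, admissible j s -> corrects j s (next j s).
Variable p0 : X.
Hypothesis Hp0 : forall k, d (F k p0) (x k) < c0.

Fixpoint chain (j : nat) : stage :=
  match j with
  | O => mkstage p0 p0 0
  | S j' => next j' (chain j')
  end.

Lemma chain_invariant j :
  admissible j (chain j) /\
  (forall k, d (F k (current (chain j))) (x k) <= c0 + c1 - 2 * radius j) /\
  (forall i, (i <= j)%nat -> forall k, (start (chain i) <= k)%Z ->
     d (F k (current (chain j))) (x k) <= 5 * radius i - 2 * radius j).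
Proof.
  induction j as [|j (Hadm & Hglobal & Htails)].
  - pose proof radius_0. pose proof c0_le_c1. split; [split|split].
    + intros k _. apply Hp0.
    + intros e He. exists 0%Z. intros k _. simpl. rewrite dist_refl; auto.
    + intros k. pose proof (Hp0 k). simpl. lra.
    + intros i Hi k _. replace i with 0%nat by lia. pose proof (Hp0 k). simpl. lra.
  - destruct (Hnext j (chain j) Hadm) as (Hadm' & Hpast & Hfuture).
    change (chain (S j)) with (next j (chain j)).
    set (s' := next j (chain j)) in *.
    assert (Hnew : forall k, (start s' <= k)%Z ->
              d (F k (current s')) (x k) <= radius j + tol (S j)).
    { intros k Hk. pose proof (proj1 Hadm' k Hk). pose proof (Hfuture k Hk).
      pose proof (dist_tri_l d Hm (F k (current s')) (F k (guide s')) (x k)). lra. }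
    assert (Hold : forall k, (k <= start s')%Z ->
              d (F k (current s')) (x k) <= radius j + d (F k (current (chain j))) (x k)).
    { intros k Hk. pose proof (Hpast k Hk).
      pose proof (dist_tri_l d Hm (F k (current s')) (F k (current (chain j))) (x k)). lra. }
    pose proof (radius_S j). pose proof (tol_S_le j). pose proof (radius_pos j).
    pose proof (radius_antitone 0 j ltac:(lia)). pose proof radius_0.
    split; [exact Hadm'|split].
    + intros k. destruct (Z.le_ge_cases k (start s')) as [Hk|Hk].
      * pose proof (Hold k Hk). pose proof (Hglobal k). lra.
      * pose proof (Hnew k Hk). lra.
    + intros i Hi k Hk. apply Nat.le_succ_r in Hi as [Hi | ->].
      * pose proof (radius_antitone i j Hi).
        destruct (Z.le_ge_cases k (start s')) as [Hk'|Hk'].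
        -- pose proof (Hold k Hk'). pose proof (Htails i Hi k Hk). lra.
        -- pose proof (Hnew k Hk'). lra.
      * pose proof (Hnew k Hk). lra.
Qed.

Hypothesis Hcpt : compact_space d.
Hypothesis Hcont : forall k, continuous_map d (F k).

Lemma forward_limit :
  exists p, (forall k, d (F k p) (x k) <= 2 * c1) /\ vanishes_fwd (fun k => d (F k p) (x k)).
Proof.
  destruct (compact_cluster d Hm Hcpt (fun j => current (chain j))) as [p Hp].
  exists p. split.
  - intros k. pose proof c0_le_c1.
    assert (d (F k p) (x k) <= c0 + c1); [|lra].
    apply (cluster_dist_le d _ p (x k) _ (F k) Hm (Hcont k) Hp).
    exists 0%nat. intros j _. destruct (chain_invariant j) as (_ & Hglobal & _).
    pose proof (Hglobal k). pose proof (radius_pos j). lra.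
  - intros e He. destruct (radius_small e He) as [i Hi]. exists (start (chain i)). intros k Hk.
    assert (d (F k p) (x k) <= 5 * radius i); [|lra].
    apply (cluster_dist_le d _ p (x k) _ (F k) Hm (Hcont k) Hp).
    exists i. intros j Hj. destruct (chain_invariant j) as (_ & _ & Htails).
    pose proof (Htails i Hj k Hk). pose proof (radius_pos j). lra.
Qed.

End ForwardShadowing.

Lemma forward_asymptotic_shadowing {X} (d : X -> X -> R) (F : Z -> X -> X) :
  is_metric d -> compact_space d -> (forall k, continuous_map d (F k)) ->
  local_product d F -> forall c1, c1 > 0 -> exists c0, c0 > 0 /\
  forall x, tail_shadowable d F x -> forall p0, (forall k, d (F k p0) (x k) < c0) ->
  exists p, (forall k, d (F k p) (x k) <= 2 * c1) /\ vanishes_fwd (fun k => d (F k p) (x k)).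
Proof.
  intros Hm Hcpt Hcont Hprod c1 Hc1.
  assert (HD : exists D : R -> R, forall eta, eta > 0 -> D eta > 0 /\ product_at d F eta (D eta)).
  { apply (functional_choice (fun eta delta => eta > 0 -> delta > 0 /\ product_at d F eta delta)).
    intros eta. destruct (Rlt_or_le 0 eta) as [Heta|Heta].
    - destruct (Hprod eta Heta) as [delta Hdelta]. exists delta. auto.
    - exists 0. intros; lra. }
  destruct HD as [D HD].
  exists (c0 D c1). split; [exact (c0_pos d F D HD c1 Hc1)|].
  intros x Htail p0 Hp0.
  assert (Hnext : exists next : nat -> @stage X -> @stage X, forall j s,
            admissible d F D c1 x j s -> corrects d F D c1 x j s (next j s)).
  { destruct (functional_choice (fun (js : nat * @stage X) s' =>
        admissible d F D c1 x (fst js) (snd js) -> corrects d F D c1 x (fst js) (snd js) s'))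
      as [step Hstep].
    - intros [j s]. destruct (classic (admissible d F D c1 x j s)) as [Hadm | Hadm].
      + destruct (correction_exists d F Hm D HD c1 Hc1 x Htail j s Hadm) as [s' Hs'].
        exists s'. auto.
      + exists s. simpl. tauto.
    - exists (fun j s => step (j, s)). intros j s. apply (Hstep (j, s)). }
  destruct Hnext as [next Hnext].
  exact (forward_limit d F Hm D c1 Hc1 x next Hnext p0 Hp0 Hcpt Hcont).
Qed.

(* Shadowing and the intersection condition imply L-shadowing: shadow the
   pseudo-orbit by p0, improve p0 to a point p forward asymptotic to it and a
   point q backward asymptotic to it (forward asymptotic shadowing in both
   time directions), and join p and q at time 0 by the product structure. *)
Lemma L_shadowing_of_intersection {X} (d : X -> X -> R) (f g : X -> X) :
  is_metric d -> compact_space d -> homeo_with_inverse d f g ->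
  shadowing d f g ->
  (forall eps, eps > 0 -> exists delta, delta > 0 /\
     forall x y, d x y < delta -> exists z, Vs_eps d f eps x z /\ Vu_eps d g eps y z) ->
  L_shadowing d f g.
Proof.
  intros Hm Hc Hh Hsh Hint eps Heps.
  pose proof Hh as (gf & fg & _ & _).
  pose proof (local_product_fpow d f g gf fg Hint) as Hfwd.
  pose proof (local_product_reverse d _ Hm Hfwd) as Hbwd.
  destruct (Hfwd (eps / 2)) as (dj & Hdj & Hjoin); [lra|].
  set (mu := Rmin (eps / 2) (dj / 4)).
  assert (Hmu : mu > 0) by (apply Rmin_glb_lt; lra).
  assert (Hmu_eps : mu <= eps / 2) by apply Rmin_l.
  assert (Hmu_dj : mu <= dj / 4) by apply Rmin_r.
  destruct (forward_asymptotic_shadowing d (fpow f g) Hm Hc (fpow_continuous d f g Hh)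
              Hfwd (mu / 2)) as (cf & Hcf & Sf); [lra|].
  destruct (forward_asymptotic_shadowing d (fun k => fpow f g (- k)) Hm Hc
              (fun k => fpow_continuous d f g Hh (- k)) Hbwd (mu / 2)) as (cb & Hcb & Sb); [lra|].
  destruct (Hsh (Rmin cf cb)) as (be & Hbe & Hs); [apply Rmin_glb_lt; lra|].
  pose proof (Rmin_l cf cb). pose proof (Rmin_r cf cb).
  exists (be / 2). split; [lra|]. intros xs Hjump Hvanish.
  destruct (Hs xs) as [p0 Hp0]. { intros k. pose proof (Hjump k). lra. }
  destruct (Sf xs (tail_shadowable_fwd d f g Hm fg xs Hsh Hvanish) p0) as (p & Hp & Hpv).
  { intros k. pose proof (Hp0 k). lra. }
  destruct (Sb (fun k => xs (- k)%Z) (tail_shadowable_bwd d f g Hm fg xs Hsh Hvanish) p0)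
    as (q & Hq & Hqv).
  { intros k. pose proof (Hp0 (- k)%Z). lra. }
  destruct (Hjoin 0%Z p q) as (w & Hwp & Hwpv & Hwq & Hwqv).
  { pose proof (Hp 0%Z) as Hp_0. pose proof (Hq 0%Z) as Hq_0. simpl in Hp_0, Hq_0 |- *.
    pose proof (dist_tri_r d Hm p (xs 0%Z) q). lra. }
  exists w. split.
  - intros k. destruct (Z.le_ge_cases 0 k) as [Hk|Hk].
    + pose proof (Hwp k Hk). pose proof (Hp k).
      pose proof (dist_tri_l d Hm (fpow f g k w) (fpow f g k p) (xs k)). lra.
    + pose proof (Hwq k Hk). pose proof (Hq (- k)%Z) as Hqk. rewrite !Z.opp_involutive in Hqk.
      pose proof (dist_tri_l d Hm (fpow f g k w) (fpow f g k q) (xs k)). lra.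
  - apply tends_to_0_Z_of_vanishes.
    + intros k. apply dist_nonneg, Hm.
    + apply (vanishes_fwd_tri d (fun k => fpow f g k p)); auto.
    + apply (vanishes_bwd_tri d (fun k => fpow f g k q)); auto.
      exact (vanishes_bwd_of_reverse _ Hqv).
Qed.

Theorem theoremD (X : Type) (d : X -> X -> R) (f g : X -> X)
  (Hmet : is_metric d) (Hcpt : compact_space d)
  (Hhom : homeo_with_inverse d f g) :
  L_shadowing d f g <->
  (shadowing d f g /\
   forall eps, eps > 0 -> exists delta, delta > 0 /\
     forall x y, d x y < delta ->
       exists z, Vs_eps d f eps x z /\ Vu_eps d g eps y z).
Proof.
  pose proof Hhom as (gf & fg & _ & _).
  split.
  - intros HL. split.
    + exact (shadowing_of_L_shadowing d f g Hmet fg Hcpt Hhom HL).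
    + exact (intersection_of_L_shadowing d f g Hmet fg HL).
  - intros [Hsh Hint]. exact (L_shadowing_of_intersection d f g Hmet Hcpt Hhom Hsh Hint).
Qed.
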